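(* Let $\omega\in\mathbb{C}_*^d$ and let $u:k\mapsto\omega^kh(k)$ be a nonzero vectorial $pg$-sequence, where $h=(h_1,\dots,h_r)\in\mathbb{C}[z]\otimes\mathbb{C}^r$ and $h_i$ has multi-degree $\delta(i)\in\mathbb{Z}^d_+$. Let $A_0$ be the (unclosed) linear span of the $\mathbb{Z}^d$-translates of $u$. If $|\delta(i)|\ge2$ for some $i$, then there exists a nonzero vectorial $pg$-sequence $w:k\mapsto\omega^kg(k)$ in $A_0$ with $g\in\mathbb{C}[z]\otimes\mathbb{C}^r$ a nonconstant vector-valued polynomial of total degree at most one in each coordinate (i.e. a nonconstant linear vector-valued polynomial).
   Context: $\mathbb{C}[z]=\mathbb{C}[z_1,\dots,z_d]$, $\mathbb{C}_*^d=(\mathbb{C}\setminus\{0\})^d$, $\omega^k=\prod_i\omega_i^{k_i}$. The multi-degree of a nonzero polynomial is the exponent $\delta\in\mathbb{Z}^d_+$ of its leading monomial $z^\delta$ with respect to the lexicographic order on $\mathbb{Z}^d_+$, and $|\delta|=\delta_1+\dots+\delta_d$. The $\mathbb{Z}^d$-translates of $u$ are the functions $k\mapsto u(k-j)$, $j\in\mathbb{Z}^d$. *)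

From HB Require Import structures.
From mathcomp Require Import all_boot all_order all_algebra.
From mathcomp Require Import reals.
From mathcomp Require Import complex.
From mathcomp Require Import mpoly.
Set Implicit Arguments. Unset Strict Implicit. Unset Printing Implicit Defensive.
Import Order.TTheory GRing.Theory Num.Theory.
Local Open Scope ring_scope.

Fixpoint lexle (s t : seq nat) : bool :=
  match s, t with
  | x :: s', y :: t' => (x < y)%N || ((x == y) && lexle s' t')
  | _, _ => true
  end.

Definition is_multideg (d : nat) (F : ringType) (p : {mpoly F[d]}) (m : 'X_{1..d}) : Prop :=
  m \in msupp p /\ forall m', m' \in msupp p -> lexle m' m.

Definition absdeg (d : nat) (m : 'X_{1..d}) : nat := mdeg m.

Definition cpow (d : nat) (F : unitRingType) (om : 'I_d -> F) (k : 'I_d -> int) : F :=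
  \prod_(i < d) (om i) ^ (k i).

Definition pgseq (d r : nat) (F : comUnitRingType) (om : 'I_d -> F)
    (h : 'I_r -> {mpoly F[d]}) : ('I_d -> int) -> 'I_r -> F :=
  fun k i => cpow om k * (h i).@[fun j => (k j)%:~R].

Definition in_translate_span (d r : nat) (F : ringType)
    (u w : ('I_d -> int) -> 'I_r -> F) : Prop :=
  exists (s : seq (F * ('I_d -> int))),
    forall k i, w k i = \sum_(cj <- s) cj.1 * u (fun l => k l - cj.2 l) i.

Definition nonzero_seq (d r : nat) (F : ringType) (u : ('I_d -> int) -> 'I_r -> F) : Prop :=
  exists k i, u k i != 0.

(* Let h_i be a component of maximal total degree N >= 2 and write its leading
   monomial as z_l z^mu with |mu| = N - 1.  Apply to every component the
   backward differences (nabla_j p)(z) = p(z) - p(z - e_j), with j running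
   through mu.  Each nabla_j lowers the degree by one and differs from the
   partial derivative d_j only in degrees two below the top, so nabla^mu h has
   degree at most one and its z_l-coefficient in h_i is that of d^mu h_i, a
   positive multiple of the leading coefficient.  On sequences,
   omega^k (nabla_j p)(k) = omega^k p(k) - omega_j omega^(k - e_j) p(k - e_j)
   is a combination of translates; and an affine polynomial whose
   z_l-coefficient is nonzero cannot vanish at both 0 and -e_l. *)

From HB Require Import structures.
From mathcomp Require Import all_boot all_order all_algebra.
From mathcomp Require Import reals complex mpoly zify ring.
Import Order.TTheory GRing.Theory Num.Theory.
Local Open Scope ring_scope.
Set Implicit Arguments. Unset Strict Implicit.

Lemma exists_lep1m (n : nat) (m : 'X_{1..n}) :
  (0 < mdeg m)%N -> exists l, (U_(l) <= m)%MM.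
Proof.
move=> m_gt0; case: (pickP (fun l => m l != 0%N)) => [l ml|m0].
  by exists l; rewrite lep1mP.
by move: m_gt0; rewrite mdegE big1 // => l _; apply/eqP/negbFE/m0.
Qed.

Lemma mcoeff_mderivm_eq0 (n : nat) (R : numDomainType) (mu m : 'X_{1..n})
    (p : {mpoly R[n]}) :
  ((p^`M[mu])@_m == 0) = (p@_(mu + m) == 0).
Proof.
rewrite mcoeff_mderivm mulrn_eq0 -[X in X || _]negbK -lt0n prodn_gt0 //.
by move=> j; rewrite ffact_gt0 mnmDE leq_addr.
Qed.

Section BackwardDifference.
Variables (n : nat) (R : comRingType).
Implicit Types (p q : {mpoly R[n]}) (m : 'X_{1..n}) (l : 'I_n).

Definition mshift l : n.-tuple {mpoly R[n]} := [tuple 'X_i - (i == l)%:R | i < n].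

Definition mdiff l p := p - (p \mPo mshift l).

Lemma mdiff_is_linear l : linear (mdiff l).
Proof.
by move=> c p q; rewrite /mdiff linearP /= scalerBr addrACA opprD.
Qed.

HB.instance Definition _ l :=
  GRing.isLinear.Build R {mpoly R[n]} {mpoly R[n]} _ (mdiff l) (mdiff_is_linear l).

Lemma meval_mdiff l v p :
  (mdiff l p).@[v] = p.@[v] - p.@[fun j => v j - (j == l)%:R].
Proof.
rewrite /mdiff mevalB comp_mpoly_meval; congr (_ - _); apply: meval_eq => j.
by rewrite tnth_mktuple mevalB mevalXU rmorph_nat.
Qed.

Lemma msizeMX_le p m : (msize (p * 'X_[m]) <= msize p + mdeg m)%N.
Proof.
rewrite msizeE (perm_big _ (msuppMX p m)) big_map; apply/bigmax_leqP_seq => m' m'p _.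
by rewrite mdegD addnC -addSn leq_add2r msize_mdeg_lt.
Qed.

Lemma mderivXn l a : ('X_l ^+ a : {mpoly R[n]})^`M(l) = a%:R *: 'X_l ^+ a.-1.
Proof.
rewrite !mpolyXn mderivX mulmnE mnm1E eqxx mul1n; congr (_ *: 'X_[_]).
by apply/mnmP => i; rewrite mnmBE !mulmnE mnm1E; case: (l == i) => /=; lia.
Qed.

Lemma msizeXn l k : msize ('X_l ^+ k : {mpoly R[n]}) = k.+1.
Proof. by rewrite mpolyXn msizeX mdegMn mdeg1 mul1n. Qed.

Lemma msize_binomial_tail l a :
  (msize ('X_l ^+ a - ('X_l - 1) ^+ a - a%:R *: 'X_l ^+ a.-1 : {mpoly R[n]})
     <= a.-1)%N.
Proof.
case: a => [|b]; first by rewrite !expr0 scale0r !subrr msize0.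
rewrite exprDn !big_ord_recl /= /bump /= subn0 expr0 mulr1 bin0 mulr1n.
rewrite add1n subSS subn0 expr1 mulrN1 bin1 scaler_nat.
set rest := \sum_(i < b) _.
have -> : forall x y : {mpoly R[n]},
    x - (x + (- y *+ b.+1 + rest)) - y *+ b.+1 = - rest.
  by move=> x y; ring.
rewrite msizeN; apply: (leq_trans (msize_sum _ _ _)); apply/bigmax_leqP => i _.
rewrite -scaler_nat; apply: (leq_trans (msizeZ_le _ _)).
rewrite -signr_odd mulrC mulr_sign.
by case: odd; rewrite ?msizeN msizeXn; have := ltn_ord i; lia.
Qed.

Lemma msize_mdiff_sub_mderivX l m :
  (msize (mdiff l 'X_[m] - ('X_[m] : {mpoly R[n]})^`M(l)) <= (mdeg m).-1)%N.
Proof.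
set a := m l; set m' := (m - U_(l) *+ a)%MM.
have m'l : m' l = 0%N by rewrite mnmBE mulmnE mnm1E eqxx mul1n subnn.
have split_m : m = (U_(l) *+ a + m')%MM.
  apply/mnmP => i; rewrite mnmDE mnmBE mulmnE mnm1E /a.
  by case: (eqVneq l i) => [<-|_] /=; lia.
have shift_m' : 'X_[m'] \mPo mshift l = 'X_[m'].
  rewrite comp_mpolyX mpolyXE_id; apply: eq_bigr => i _; rewrite tnth_mktuple.
  by case: (eqVneq i l) => [->|_]; rewrite ?m'l ?expr0 ?subr0.
have deriv_m' : ('X_[m'] : {mpoly R[n]})^`M(l) = 0 by rewrite mderivX m'l scale0r.
have -> : mdiff l 'X_[m] - 'X_[m]^`M(l) =
    ('X_l ^+ a - ('X_l - 1) ^+ a - a%:R *: 'X_l ^+ a.-1) * 'X_[m'].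
  rewrite split_m mpolyXD -mpolyXn /mdiff rmorphM rmorphXn /= shift_m'.
  rewrite comp_mpolyXU -tnth_nth tnth_mktuple eqxx mderivM deriv_m' mulr0 addr0.
  by rewrite mderivXn !scaler_nat; ring.
set B := (X in X * _).
have [->|B_neq0] := eqVneq B 0; first by rewrite mul0r msize0.
apply: (leq_trans (msizeMX_le _ _)); move: (msize_binomial_tail l a).
rewrite -/B split_m mdegD mdegMn mdeg1 mul1n.
by move: B_neq0; rewrite -msize_poly_eq0; lia.
Qed.

Lemma msize_le_mcoeff p k :
  (forall m, (k <= mdeg m)%N -> p@_m = 0) -> (msize p <= k)%N.
Proof.
move=> coef0; rewrite leqNgt; apply/negP => k_lt.
have p_neq0 : p != 0 by apply: contraTneq k_lt => ->; rewrite msize0.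
have := mlead_supp p_neq0; rewrite mcoeff_msupp coef0 ?eqxx //.
by rewrite -ltnS mlead_deg.
Qed.

Lemma msize_mderiv l p : (msize p^`M(l) <= (msize p).-1)%N.
Proof.
apply: msize_le_mcoeff => m le_m; rewrite mcoeff_deriv.
have /msize_mdeg_ge : (msize p <= mdeg (m + U_(l)))%N.
  by rewrite mdegD mdeg1 addn1; case: (msize p) le_m.
by rewrite mcoeff_msupp negbK => /eqP ->; rewrite mul0rn.
Qed.

Lemma msize_mdiff_sub_mderiv l p :
  (msize (mdiff l p - p^`M(l)) <= (msize p).-2)%N.
Proof.
rewrite {1 2}[p]mpolyE (raddf_sum (mdiff l)) (raddf_sum (mderiv l)) -sumrB /=.
apply: (leq_trans (msize_sum _ _ _)); apply/bigmax_leqP_seq => m m_supp _.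
rewrite linearZ mderivZ -scalerBr; apply: (leq_trans (msizeZ_le _ _)).
apply: (leq_trans (msize_mdiff_sub_mderivX _ _)).
by have := msize_mdeg_lt m_supp; lia.
Qed.

Lemma msize_mdiff l p : (msize (mdiff l p) <= (msize p).-1)%N.
Proof.
rewrite -[mdiff l p](subrK p^`M(l)); apply: (leq_trans (msizeD_le _ _)).
rewrite geq_max msize_mderiv andbT; apply: (leq_trans (msize_mdiff_sub_mderiv _ _)).
by case: (msize p) => [|[]].
Qed.

Lemma mdiff_affine l p : (msize p <= 2)%N -> mdiff l p = (p@_U_(l))%:MP.
Proof.
move=> p_affine; have : mdiff l p - p^`M(l) == 0.
  rewrite -msize_poly_eq0 -leqn0 (leq_trans (msize_mdiff_sub_mderiv _ _)) //.
  by case: (msize p) p_affine => [|[|[]]].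
rewrite subr_eq0 => /eqP ->.
rewrite [LHS]msize1_polyC ?mcoeff_deriv ?add0m ?mnm0E //.
by apply: (leq_trans (msize_mderiv _ _)); case: (msize p) p_affine => [|[|[]]].
Qed.

Definition mnm_seq (mu : 'X_{1..n}) : seq 'I_n :=
  flatten [seq nseq (mu i) i | i <- enum 'I_n].

Lemma size_mnm_seq mu : size (mnm_seq mu) = mdeg mu.
Proof.
rewrite size_flatten /shape -map_comp sumnE big_map big_enum mdegE /=.
by apply: eq_bigr => i _; rewrite size_nseq.
Qed.

Definition mdiffm (mu : 'X_{1..n}) p := foldr mdiff p (mnm_seq mu).

Lemma msize_foldr_le (f : 'I_n -> {mpoly R[n]} -> {mpoly R[n]}) s p :
    (forall l q, msize (f l q) <= (msize q).-1)%N ->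
  (msize (foldr f p s) <= msize p - size s)%N.
Proof.
move=> f_size; elim: s => [|l s IH] /=; first by rewrite subn0.
by apply: (leq_trans (f_size _ _)); lia.
Qed.

Lemma msize_foldr_mdiff_sub_mderiv s p :
  (msize (foldr mdiff p s - foldr (@mderiv n R) p s) <= msize p - (size s).+1)%N.
Proof.
elim: s => [|l s IH] /=; first by rewrite subrr msize0.
set D := foldr mdiff p s in IH *; set E := foldr (@mderiv n R) p s in IH *.
have -> : mdiff l D - E^`M(l) = (mdiff l E - E^`M(l)) + mdiff l (D - E).
  by rewrite raddfB; ring.
apply: (leq_trans (msizeD_le _ _)); rewrite geq_max; apply/andP; split.
  apply: (leq_trans (msize_mdiff_sub_mderiv _ _)).
  by have := @msize_foldr_le (@mderiv n R) s p msize_mderiv; rewrite -/E; lia.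
by apply: (leq_trans (msize_mdiff _ _)); lia.
Qed.

Lemma msize_mdiffm mu p : (msize (mdiffm mu p) <= msize p - mdeg mu)%N.
Proof. by rewrite -size_mnm_seq; apply/msize_foldr_le/msize_mdiff. Qed.

Lemma mcoeff_mdiffm mu p m :
  (msize p <= mdeg mu + (mdeg m).+1)%N -> (mdiffm mu p)@_m = (p^`M[mu])@_m.
Proof.
move=> size_p; apply/eqP; rewrite -subr_eq0 -mcoeffB mderivm_foldr.
rewrite -[_ == 0]negbK -mcoeff_msupp; apply: msize_mdeg_ge.
have := msize_foldr_mdiff_sub_mderiv (mnm_seq mu) p.
by rewrite size_mnm_seq /mdiffm /mnm_seq; lia.
Qed.

Lemma meval_mdiffm_translates mu :
  exists t : seq (R * ('I_n -> int)), forall p (k : 'I_n -> int),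
    (mdiffm mu p).@[fun j => (k j)%:~R]
      = \sum_(cj <- t) cj.1 * p.@[fun j => (k j - cj.2 j)%:~R].
Proof.
rewrite /mdiffm; elim: (mnm_seq mu) => [|l s [t IH]] /=.
  exists [:: (1, fun _ => 0)] => p k; rewrite big_seq1 mul1r.
  by apply: meval_eq => j; rewrite subr0.
exists (t ++ [seq (- cj.1, fun j => cj.2 j + (j == l)%:Z) | cj <- t]) => p k.
rewrite meval_mdiff big_cat big_map /= IH.
have -> : (foldr mdiff p s).@[fun j => (k j)%:~R - (j == l)%:R] =
          (foldr mdiff p s).@[fun j => (k j - (j == l)%:Z)%:~R].
  by apply: meval_eq => j; rewrite intrB; case: (j == l).
rewrite IH -sumrN; congr (_ + _); apply: eq_bigr => cj _.
rewrite mulNr; congr (- (_ * _)); apply: meval_eq => j /=.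
by rewrite opprD addrA addrAC.
Qed.

End BackwardDifference.

Section PgSequences.
Variables (d r : nat) (F : fieldType) (om : 'I_d -> F).
Hypothesis om_neq0 : forall l, om l != 0.

Lemma cpow_neq0 k : cpow om k != 0.
Proof. by apply/prodf_neq0 => i _; rewrite expfz_eq0 negb_and om_neq0 orbT. Qed.

Lemma cpowB k j : cpow om k = cpow om j * cpow om (fun l => k l - j l).
Proof.
rewrite /cpow -big_split; apply: eq_bigr => i _ /=.
by rewrite -exprzDr ?unitfE // addrC subrK.
Qed.

Lemma pgseq_mdiffm_in_translate_span mu (h : 'I_r -> {mpoly F[d]}) :
  in_translate_span (pgseq om h) (pgseq om (fun i => mdiffm mu (h i))).
Proof.
have [t tE] := meval_mdiffm_translates F mu.
exists [seq (cj.1 * cpow om cj.2, cj.2) | cj <- t] => k i.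
rewrite /pgseq tE big_map mulr_sumr; apply: eq_bigr => cj _ /=.
by rewrite (cpowB k cj.2); set a := cpow om cj.2; set b := cpow om _; ring.
Qed.

Lemma nonzero_pgseq_affine (g : 'I_r -> {mpoly F[d]}) i l :
  (msize (g i) <= 2)%N -> (g i)@_U_(l) != 0 -> nonzero_seq (pgseq om g).
Proof.
move=> g_affine coef_neq0.
pose k0 : 'I_d -> int := fun _ => 0; pose k1 : 'I_d -> int := fun j => - (j == l)%:Z.
have eval_diff : (g i).@[fun j => (k0 j)%:~R] - (g i).@[fun j => (k1 j)%:~R] = (g i)@_U_(l).
  rewrite -[RHS](mevalC (fun j => (k0 j)%:~R)) -mdiff_affine // meval_mdiff.
  by congr (_ - _); apply: meval_eq => j; rewrite /k0 /k1 sub0r intrN; case: (j == l).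
have [g0|g0] := eqVneq (g i).@[fun j => (k0 j)%:~R] 0.
  exists k1, i; rewrite mulf_neq0 ?cpow_neq0 //.
  by move: coef_neq0; rewrite -eval_diff g0 sub0r oppr_eq0.
by exists k0, i; rewrite mulf_neq0 ?cpow_neq0.
Qed.

End PgSequences.

Theorem lemma5p1 (R : realType) (d r : nat) (om : 'I_d -> R[i])
    (h : 'I_r -> {mpoly R[i][d]}) :
  (forall l, om l != 0) ->
  nonzero_seq (pgseq om h) ->
  (exists (i : 'I_r) (m : 'X_{1..d}), is_multideg (h i) m /\ (2 <= absdeg m)%N) ->
  exists g : 'I_r -> {mpoly R[i][d]},
    (forall i, (msize (g i) <= 2)%N) /\
    (exists i, (1 < msize (g i))%N) /\
    nonzero_seq (pgseq om g) /\
    in_translate_span (pgseq om h) (pgseq om g).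
Proof.
move=> om_neq0 _ [i0 [m0 [[m0_supp _] m0_deg]]].
have [i1 _ max_i1] := @arg_maxnP _ i0 predT (fun i => msize (h i)) isT.
set p := h i1 in max_i1 *.
have size_p : (3 <= msize p)%N.
  by have := msize_mdeg_lt m0_supp; have := max_i1 i0 isT; rewrite /absdeg in m0_deg; lia.
have p_neq0 : p != 0 by apply: contraTneq size_p => ->; rewrite msize0.
set beta := mlead p; have beta_deg : (mdeg beta).+1 = msize p := mlead_deg p_neq0.
have [l /submK mu_beta] : exists l, (U_(l) <= beta)%MM.
  by apply: exists_lep1m; rewrite -ltnS beta_deg ltnW.
set mu := (beta - U_(l))%MM in mu_beta.
have mu_deg : mdeg mu = (msize p - 2)%N.
  by rewrite -beta_deg -mu_beta mdegD mdeg1 addn1 !subSS subn0.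
exists (fun i => mdiffm mu (h i)).
have g_affine i : (msize (mdiffm mu (h i)) <= 2)%N.
  have : (msize (mdiffm mu (h i)) <= msize (h i) - mdeg mu)%N := msize_mdiffm _ _.
  by have := max_i1 i isT; lia.
have g_coef : (mdiffm mu p)@_U_(l) != 0.
  rewrite mcoeff_mdiffm; last by rewrite mdeg1 mu_deg subnK // ltnW.
  by rewrite mcoeff_mderivm_eq0 mu_beta -mcoeff_msupp mlead_supp.
split; first exact: g_affine.
split; first by exists i1; rewrite -(mdeg1 l) msize_mdeg_lt // mcoeff_msupp.
split; first exact: nonzero_pgseq_affine (g_affine i1) g_coef.
exact: pgseq_mdiffm_in_translate_span.
Qed.
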